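(* Let $\mathcal{H}$ be an $n$-dimensional (real or complex) Hilbert space, let $F=\{f_i\}_{i=1}^N$ be a tight frame for $\mathcal{H}$, and let $\{q_i\}_{i=1}^N$ be the weight number sequence associated with a probability sequence $\{p_i\}_{i=1}^N$. Then $(F,S_F^{-1}F)$ is the unique 1-erasure POD-pair among the dual pairs $(F,G)$ with $G$ a dual of $F$ if and only if $(F,S_F^{-1}F)$ is the unique 1-erasure PASOD-pair among the dual pairs $(F,G)$ with $G$ a dual of $F$.
   Context: A finite sequence $F=\{f_i\}_{i=1}^N$ in $\mathcal{H}$ is a frame if there are $A,B>0$ with $A\|f\|^2\le\sum_{i=1}^N|\langle f,f_i\rangle|^2\le B\|f\|^2$ for all $f$; it is tight if one can take $A=B$. The frame operator is $S_Ff=\sum_i\langle f,f_i\rangle f_i$; canonical dual $S_F^{-1}F=\{S_F^{-1}f_i\}_{i=1}^N$. A frame $G=\{g_i\}_{i=1}^N$ is a dual of $F$ if $f=\sum_i\langle f,f_i\rangle g_i=\sum_i\langle f,g_i\rangle f_i$ for all $f$; then $(F,G)$ is an $(N,n)$ dual pair. A probability sequence is $\{p_i\}_{i=1}^N$ with $0\le p_i\le1$, $\sum p_i=1$; weight numbers $q_i=\frac{\sum_{j} p_j}{\sum_{j} p_j-p_i}\cdot\frac{N-1}{n}$. For $\Lambda\subseteq\{1,\dots,N\}$ the error operator is $E_{\Lambda,(F,G)}f=\sum_{i\in\Lambda}q_i\langle f,f_i\rangle g_i$. Let $\mathcal{O}_P^{(1)}(F,G)=\max_{|\Lambda|=1}\|E_{\Lambda,(F,G)}\|$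 and $\mathcal{A}_P^{(1)}(F,G)=\max_{|\Lambda|=1}\frac{\|E_{\Lambda,(F,G)}\|+\rho(E_{\Lambda,(F,G)})}{2}$ ($\rho$ = spectral radius); let $\mathcal{O}_P^{(1)}$ and $\mathcal{A}_P^{(1)}$ be their infima over all $(N,n)$ dual pairs in $\mathcal{H}$. A dual pair is a 1-erasure POD-pair if $\mathcal{O}_P^{(1)}(F,G)=\mathcal{O}_P^{(1)}$, and a 1-erasure PASOD-pair if $\mathcal{A}_P^{(1)}(F,G)=\mathcal{A}_P^{(1)}$. *)

From HB Require Import structures.
From mathcomp Require Import all_boot all_order all_algebra.
From mathcomp Require Import boolp classical_sets reals.
From mathcomp Require Import complex.
Set Implicit Arguments. Unset Strict Implicit. Unset Printing Implicit Defensive.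
Import Order.TTheory GRing.Theory Num.Theory.
Local Open Scope ring_scope.

(* The scalar field of the Hilbert space: either R or C = R[i].
   sK = scalar field, sconj = complex conjugation (identity over R),
   sabs = modulus (real valued), sofR = inclusion of the reals into sK,
   stoC = inclusion of sK into the complex numbers (used to compute the
   spectrum, i.e. complex eigenvalues, also for real operators). *)
Record scalars (R : realType) := Scalars {
  sK : fieldType;
  sconj : sK -> sK;
  sabs : sK -> R;
  sofR : R -> sK;
  stoC : sK -> R[i]
}.

Definition realScalars (R : realType) : scalars R :=
  @Scalars R R id (fun x => `|x|) id (fun x => x%:C%C).

Definition complexScalars (R : realType) : scalars R :=
  @Scalars R R[i] (fun z => z^*%C) (fun z => Normc.normc z) (fun x => x%:C%C) id.

Section Frames.
Variables (R : realType) (S : scalars R) (n N : nat).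
Local Notation K := (sK S).
Local Notation vec := 'cV[K]_n.

Definition inner (x y : vec) : K := \sum_(k < n) x k 0 * (@sconj _ S) (y k 0).

Definition vnorm (x : vec) : R := Num.sqrt (\sum_(k < n) (@sabs _ S) (x k 0) ^+ 2).

Definition vadj (x : vec) : 'rV[K]_n := map_mx ((@sconj _ S)) x^T.

Definition opnorm (A : 'M[K]_n) : R :=
  sup [set vnorm (A *m x) | x in [set x : vec | vnorm x = 1]]%classic.

Definition specrad (A : 'M[K]_n) : R :=
  sup [set Normc.normc l | l in [set l : R[i] | eigenvalue (map_mx ((@stoC _ S)) A) l]].

Definition is_frame (F : 'I_N -> vec) : Prop :=
  exists A B : R, 0 < A /\ 0 < B /\
    forall f : vec,
      A * vnorm f ^+ 2 <= \sum_i (@sabs _ S) (inner f (F i)) ^+ 2 /\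
      \sum_i (@sabs _ S) (inner f (F i)) ^+ 2 <= B * vnorm f ^+ 2.

Definition is_tight_frame (F : 'I_N -> vec) : Prop :=
  is_frame F /\
  exists A : R, 0 < A /\
    forall f : vec, \sum_i (@sabs _ S) (inner f (F i)) ^+ 2 = A * vnorm f ^+ 2.

Definition frame_op (F : 'I_N -> vec) : 'M[K]_n := \sum_i (F i *m vadj (F i)).

Definition canon_dual (F : 'I_N -> vec) : 'I_N -> vec :=
  fun i => invmx (frame_op F) *m F i.

Definition is_dual (F G : 'I_N -> vec) : Prop :=
  is_frame G /\
  forall f : vec,
    f = \sum_i inner f (F i) *: G i /\ f = \sum_i inner f (G i) *: F i.

Definition prob_seq (p : 'I_N -> R) : Prop :=
  (forall i, 0 <= p i <= 1) /\ \sum_i p i = 1.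

Definition weight (p : 'I_N -> R) (i : 'I_N) : R :=
  (\sum_j p j) / (\sum_j p j - p i) * ((N - 1)%:R / n%:R).

Definition err_op (p : 'I_N -> R) (F G : 'I_N -> vec) (L : {set 'I_N})
  : 'M[K]_n :=
  \sum_(i in L) (@sofR _ S) (weight p i) *: (G i *m vadj (F i)).

Definition O1 (p : 'I_N -> R) (F G : 'I_N -> vec) : R :=
  \big[Num.max/0]_(L : {set 'I_N} | #|L| == 1%N) opnorm (err_op p F G L).

Definition A1 (p : 'I_N -> R) (F G : 'I_N -> vec) : R :=
  \big[Num.max/0]_(L : {set 'I_N} | #|L| == 1%N)
     ((opnorm (err_op p F G L) + specrad (err_op p F G L)) / 2).

Definition POD_among_duals (p : 'I_N -> R) (F G0 : 'I_N -> vec) : Prop :=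
  is_dual F G0 /\ forall G, is_dual F G -> O1 p F G0 <= O1 p F G.

Definition PASOD_among_duals (p : 'I_N -> R) (F G0 : 'I_N -> vec) : Prop :=
  is_dual F G0 /\ forall G, is_dual F G -> A1 p F G0 <= A1 p F G.

Definition unique_POD_among_duals (p : 'I_N -> R) (F G0 : 'I_N -> vec) : Prop :=
  POD_among_duals p F G0 /\ forall G, POD_among_duals p F G -> G = G0.

Definition unique_PASOD_among_duals (p : 'I_N -> R) (F G0 : 'I_N -> vec) : Prop :=
  PASOD_among_duals p F G0 /\ forall G, PASOD_among_duals p F G -> G = G0.

End Frames.

(* For a tight frame with bound A the canonical dual is c_i = f_i / A.  One
   erasure at i leaves the rank-one error operator q_i g_i f_i^*, of norm
   q_i |g_i| |f_i| and spectral radius q_i |<g_i, f_i>|.  Hence A1 <= O1 for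
   every dual, with equality at c since c_i is parallel to f_i; this settles the
   passage from a unique PASOD-dual c to a unique POD-dual c.  Conversely, let c
   be the unique POD-dual and G a dual with A1(G) <= O1(c).  At each index i
   either q_i |c_i| |f_i| < O1(c), or the bound on the average forces
   Re <g_i, c_i> < |c_i|^2 unless g_i = c_i; in both cases the dual
   (1 - t) c + t G still satisfies O1 <= O1(c) for small t > 0.  Uniqueness
   makes it equal to c, whence G = c. *)
From HB Require Import structures.
From mathcomp Require Import all_boot all_order all_algebra.
From mathcomp Require Import boolp classical_sets reals.
From mathcomp Require Import complex.
From mathcomp Require Import ring lra.
Set Implicit Arguments. Unset Strict Implicit. Unset Printing Implicit Defensive.
Import Order.TTheory GRing.Theory Num.Theory.
Local Open Scope ring_scope.

(* Lagrange's identity: the difference of the two sides is half of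
   [\sum_i \sum_j (a i * b j - a j * b i) ^+ 2]. *)
Lemma cauchy_schwarz_sqr (R : realFieldType) (I : finType) (a b : I -> R) :
  (\sum_i a i * b i) ^+ 2 <= (\sum_i a i ^+ 2) * (\sum_i b i ^+ 2).
Proof.
set X := \sum_i a i ^+ 2; set Y := \sum_i b i ^+ 2; set P := \sum_i a i * b i.
have XY : \sum_i \sum_j a i ^+ 2 * b j ^+ 2 = X * Y.
  by rewrite /X /Y mulr_suml; apply: eq_bigr => i _; rewrite mulr_sumr.
have YX : \sum_i \sum_j a j ^+ 2 * b i ^+ 2 = X * Y.
  by rewrite exchange_big /=; apply: XY.
have PP : \sum_i \sum_j (a i * b i) * (a j * b j) = P ^+ 2.
  by rewrite expr2 /P mulr_suml; apply: eq_bigr => i _; rewrite mulr_sumr.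
have lagrange_terms : \sum_i \sum_j (a i * b j - a j * b i) ^+ 2 =
    \sum_i \sum_j (a i ^+ 2 * b j ^+ 2 + a j ^+ 2 * b i ^+ 2
                   - ((a i * b i) * (a j * b j)) *+ 2).
  by apply: eq_bigr => i _; apply: eq_bigr => j _; rewrite mulr2n; ring.
have lagrange : \sum_i \sum_j (a i * b j - a j * b i) ^+ 2 = X * Y + X * Y - P ^+ 2 *+ 2.
  rewrite lagrange_terms -{1}XY -YX -PP -sumrMnl -big_split -sumrB /=.
  by apply: eq_bigr => i _; rewrite -sumrMnl -big_split -sumrB.
have : 0 <= \sum_i \sum_j (a i * b j - a j * b i) ^+ 2.
  by apply: sumr_ge0 => i _; apply: sumr_ge0 => j _; apply: sqr_ge0.
by rewrite lagrange mulr2n; lra.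
Qed.

Lemma cauchy_schwarz (R : rcfType) (I : finType) (a b : I -> R) :
  \sum_i a i * b i <= Num.sqrt (\sum_i a i ^+ 2) * Num.sqrt (\sum_i b i ^+ 2).
Proof.
have X0 : 0 <= \sum_i a i ^+ 2 by apply: sumr_ge0 => i _; apply: sqr_ge0.
rewrite -sqrtrM // (le_trans (ler_norm _)) // -sqrtr_sqr ler_sqrt.
  exact: cauchy_schwarz_sqr.
by rewrite mulr_ge0 // sumr_ge0 // => i _; apply: sqr_ge0.
Qed.

(* [sup set0 = 0], so [s] need only be attained when it is positive. *)
Lemma sup_nneg_attained (R : realType) (E : set R) (s : R) : 0 <= s ->
  (forall y, E y -> 0 <= y <= s) -> (0 < s -> E s) -> sup E = s.
Proof.
move=> s0 Es_ub Es.
have [[y Ey]|nE] := pselect (exists y, E y); last first.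
  have [s_gt0|] := ltP 0 s; first by case: nE; exists s; apply: Es.
  move=> s_le0; have -> : E = set0 by apply/seteqP; split => z // Ez; case: nE; exists z.
  by rewrite sup0; apply/le_anti; rewrite s0 s_le0.
have ubE : has_ubound E by exists s => z /Es_ub /andP[].
apply/le_anti/andP; split; first by apply: ge_sup; [exists y | move=> z /Es_ub /andP[]].
have [/Es Es_in|s_le0] := ltP 0 s; first exact: ub_le_sup.
have /andP[y0 _] := Es_ub y Ey.
exact: le_trans s_le0 (le_trans y0 (ub_le_sup ubE Ey)).
Qed.

Lemma bigmax_cards1 d (T : orderType d) (I : finType) (x : T) (f : {set I} -> T) :
  \big[Order.max/x]_(L : {set I} | #|L| == 1%N) f L = \big[Order.max/x]_i f [set i].
Proof.
apply/le_anti/andP; split.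
  apply: bigmax_le => [|L]; first exact: bigmax_ge_id.
  by case/cards1P => i ->; apply: le_bigmax.
apply: bigmax_le => [|i _]; first exact: bigmax_ge_id.
by apply: le_bigmax_cond; rewrite cards1.
Qed.

Definition eventually_right0 (R : realFieldType) (P : R -> Prop) :=
  exists2 t0 : R, 0 < t0 & forall t, 0 < t <= t0 -> P t.

Lemma eventually_right0_forall (R : realFieldType) (I : finType) (P : I -> R -> Prop) :
  (forall i, eventually_right0 (P i)) -> eventually_right0 (fun t => forall i, P i t).
Proof.
move=> P_ev; have /fin_all_exists [t0 t0P] :
    forall i, exists t0 : R, 0 < t0 /\ forall t, 0 < t <= t0 -> P i t.
  by move=> i; have [t0 ? ?] := P_ev i; exists t0.
exists (\big[Order.min/1]_i t0 i).
  elim/big_ind: _ => // [x y x0 y0 | i _]; first by rewrite lt_min x0 y0.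
  by case: (t0P i).
move=> t /andP [t_gt0 t_le] i; apply: (t0P i).2.
by rewrite t_gt0 (le_trans t_le) // bigmin_le.
Qed.

Lemma convex_lt_eventually (R : realFieldType) (m M X : R) : m < M ->
  eventually_right0 (fun t => t <= 1 /\ (1 - t) * m + t * X <= M).
Proof.
move=> mM; have d_gt0 : 0 < `|X - m| + 1 by rewrite ltr_wpDl.
exists (Order.min 1 ((M - m) / (`|X - m| + 1))).
  by rewrite lt_min ltr01 divr_gt0 // subr_gt0.
move=> t /andP [t_gt0]; rewrite le_min => /andP [t_le1 t_le]; split => //.
rewrite ler_pdivlMr // in t_le.
have := ler_norm (X - m); nra.
Qed.

(* Laws shared by the real and the complex scalars, so that the argument is
   carried out once for both; [sre] is the real part. *)
Section ScalarLaws.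
Variables (R : realType) (S : scalars R).
Local Notation cj := (@sconj _ S).
Local Notation ab := (@sabs _ S).
Local Notation ofR := (@sofR _ S).
Local Notation toC := (@stoC _ S).

Record scalar_laws := ScalarLaws {
  sre : sK S -> R;
  cjD : forall x y, cj (x + y) = cj x + cj y;
  cjM : forall x y, cj (x * y) = cj x * cj y;
  cjK : forall x, cj (cj x) = x;
  cjR : forall r, cj (ofR r) = ofR r;
  ofRD : forall a b, ofR (a + b) = ofR a + ofR b;
  ofRM : forall a b, ofR (a * b) = ofR a * ofR b;
  ofR1 : ofR 1 = 1;
  ofR_inj : injective ofR;
  mul_cj : forall x, x * cj x = ofR (ab x ^+ 2);
  abM : forall x y, ab (x * y) = ab x * ab y;
  abD : forall x y, ab (x + y) <= ab x + ab y;
  ab_ge0 : forall x, 0 <= ab x;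
  ab_eq0 : forall x, ab x = 0 -> x = 0;
  abR : forall r, ab (ofR r) = `|r|;
  ab_cj : forall x, ab (cj x) = ab x;
  sreP : forall x, ofR (sre x *+ 2) = x + cj x;
  sre_le : forall x, sre x <= ab x;
  toCD : forall x y, toC (x + y) = toC x + toC y;
  toCM : forall x y, toC (x * y) = toC x * toC y;
  toC0 : toC 0 = 0;
  toC_cj : forall x, toC (cj x) = (toC x)^*%C;
  normc_toC : forall x, Normc.normc (toC x) = ab x;
  toCR : forall r, toC (ofR r) = r%:C%C
}.

End ScalarLaws.

Lemma real_scalar_laws (R : realType) : scalar_laws (realScalars R).
Proof.
apply: (@ScalarLaws R (realScalars R) id) => //=.
- by move=> x; rewrite real_normK ?num_real // expr2.
- exact: normrM.
- exact: ler_normD.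
- by move=> x /eqP; rewrite normr_eq0 => /eqP.
- exact: ler_norm.
- by move=> x y; rewrite rmorphD.
- by move=> x y; rewrite rmorphM.
- by move=> x; apply/eqP; rewrite eq_complex /= oppr0 !eqxx.
- by move=> x; rewrite expr0n /= addr0 sqrtr_sqr.
Qed.

Lemma complex_scalar_laws (R : realType) : scalar_laws (complexScalars R).
Proof.
apply: (@ScalarLaws R (complexScalars R) (@complex.Re R)) => //=.
- by move=> x y; rewrite rmorphD.
- by move=> x y; rewrite rmorphM.
- exact: conjcK.
- by move=> r; apply/eqP; rewrite eq_complex /= oppr0 !eqxx.
- by move=> x y; rewrite rmorphD.
- by move=> x y; rewrite rmorphM.
- exact: complexI.
- case=> a b; rewrite /Normc.normc /= sqr_sqrtr ?addr_ge0 ?sqr_ge0 //.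
  by apply/eqP; rewrite eq_complex /= !expr2; apply/andP; split; apply/eqP; ring.
- exact: Normc.normcM.
- exact: le_normcD.
- by case=> a b; rewrite /Normc.normc /= sqrtr_ge0.
- exact: Normc.eq0_normc.
- by move=> x; rewrite expr0n /= addr0 sqrtr_sqr.
- by case=> a b; rewrite /Normc.normc /= sqrrN.
- case=> a b; apply/eqP; rewrite eq_complex /=; apply/andP; split; apply/eqP;
    rewrite ?mulr2n; ring.
- case=> a b; rewrite /Normc.normc /=.
  apply: (le_trans (ler_norm a)); rewrite -sqrtr_sqr ler_sqrt ?addr_ge0 ?sqr_ge0 //.
  by rewrite lerDl sqr_ge0.
Qed.

Section Hilbert.
Variables (R : realType) (S : scalars R) (Hs : scalar_laws S).
Local Notation K := (sK S).
Local Notation cj := (@sconj _ S).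
Local Notation ab := (@sabs _ S).
Local Notation ofR := (@sofR _ S).
Local Notation toC := (@stoC _ S).
Local Notation re := (sre Hs).

Lemma ofR0 : ofR 0 = 0.
Proof. by apply: (@addrI _ (ofR 0)); rewrite -(ofRD Hs) !addr0. Qed.
Lemma ofRN a : ofR (- a) = - ofR a.
Proof. by apply: (@addrI _ (ofR a)); rewrite -(ofRD Hs) !subrr ofR0. Qed.
Lemma ofRB a b : ofR (a - b) = ofR a - ofR b.
Proof. by rewrite (ofRD Hs) ofRN. Qed.
Lemma ofRMn a k : ofR (a *+ k) = ofR a *+ k.
Proof. by elim: k => [|k IH]; rewrite ?ofR0 // !mulrS (ofRD Hs) IH. Qed.
Lemma ofR_sum (I : Type) (r : seq I) (P : pred I) (F : I -> R) :
  ofR (\sum_(i <- r | P i) F i) = \sum_(i <- r | P i) ofR (F i).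
Proof. exact: (big_morph _ (ofRD Hs) ofR0). Qed.
Lemma ofR_eq0 a : (ofR a == 0) = (a == 0).
Proof. by rewrite -ofR0 (inj_eq (ofR_inj Hs)). Qed.
Lemma ofRV a : ofR a^-1 = (ofR a)^-1.
Proof.
have [->|a0] := eqVneq a 0; first by rewrite invr0 ofR0 invr0.
have oa0 : ofR a != 0 by rewrite ofR_eq0.
by apply: (mulfI oa0); rewrite -(ofRM Hs) !divff // (ofR1 Hs).
Qed.

Lemma cj0 : cj 0 = 0.
Proof. by rewrite -ofR0 (cjR Hs). Qed.
Lemma cjN x : cj (- x) = - cj x.
Proof. by apply: (@addrI _ (cj x)); rewrite -(cjD Hs) !subrr cj0. Qed.
Lemma cjB x y : cj (x - y) = cj x - cj y.
Proof. by rewrite (cjD Hs) cjN. Qed.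
Lemma cj_sum (I : Type) (r : seq I) (P : pred I) (F : I -> K) :
  cj (\sum_(i <- r | P i) F i) = \sum_(i <- r | P i) cj (F i).
Proof. exact: (big_morph _ (cjD Hs) cj0). Qed.
Lemma toC_sum (I : Type) (r : seq I) (P : pred I) (F : I -> K) :
  toC (\sum_(i <- r | P i) F i) = \sum_(i <- r | P i) toC (F i).
Proof. exact: (big_morph _ (toCD Hs) (toC0 Hs)). Qed.

Lemma ab0 : ab 0 = 0.
Proof. by rewrite -ofR0 (abR Hs) normr0. Qed.
Lemma ab_sum (I : Type) (r : seq I) (P : pred I) (F : I -> K) :
  ab (\sum_(i <- r | P i) F i) <= \sum_(i <- r | P i) ab (F i).
Proof.
elim/big_rec2: _ => [|i y1 y2 _ IH]; first by rewrite ab0.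
by apply: (le_trans (abD Hs _ _)); rewrite lerD2l.
Qed.
Lemma abR_ge0 r : 0 <= r -> ab (ofR r) = r.
Proof. by move=> r0; rewrite (abR Hs) ger0_norm. Qed.

Lemma sre_uniq x r : ofR (r *+ 2) = x + cj x -> re x = r.
Proof.
by rewrite -(sreP Hs) => /(ofR_inj Hs) /eqP; rewrite eqrMn2r => /= /eqP ->.
Qed.
Lemma sreR r : re (ofR r) = r.
Proof. by apply: sre_uniq; rewrite (cjR Hs) ofRMn mulr2n. Qed.
Lemma sreD x y : re (x + y) = re x + re y.
Proof. by apply: sre_uniq; rewrite mulrnDl (ofRD Hs) !(sreP Hs) (cjD Hs) addrACA. Qed.
Lemma sreN x : re (- x) = - re x.
Proof. by apply: sre_uniq; rewrite mulNrn ofRN (sreP Hs) cjN opprD. Qed.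
Lemma sreB x y : re (x - y) = re x - re y.
Proof. by rewrite sreD sreN. Qed.
Lemma sreZ r x : re (ofR r * x) = r * re x.
Proof.
by apply: sre_uniq; rewrite -mulrnAr (ofRM Hs) (sreP Hs) (cjM Hs) (cjR Hs) mulrDr.
Qed.
Lemma sre_cj x : re (cj x) = re x.
Proof. by apply: sre_uniq; rewrite (sreP Hs) (cjK Hs) addrC. Qed.

Variable n : nat.
Local Notation vec := 'cV[K]_n.
Implicit Types x y z u v f g : vec.

Definition sqnorm (x : vec) : R := \sum_k ab (x k 0) ^+ 2.

Lemma sqnorm_ge0 x : 0 <= sqnorm x.
Proof. by apply: sumr_ge0 => k _; apply: sqr_ge0. Qed.
Lemma vnorm_ge0 x : 0 <= vnorm x.
Proof. exact: sqrtr_ge0. Qed.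
Lemma vnorm_sqr x : vnorm x ^+ 2 = sqnorm x.
Proof. by rewrite sqr_sqrtr // sqnorm_ge0. Qed.

Lemma inner_self x : inner x x = ofR (sqnorm x).
Proof. by rewrite /inner ofR_sum; apply: eq_bigr => k _; rewrite (mul_cj Hs). Qed.
Lemma innerDl x y z : inner (x + y) z = inner x z + inner y z.
Proof. by rewrite /inner -big_split; apply: eq_bigr => k _; rewrite mxE mulrDl. Qed.
Lemma innerZl a x y : inner (a *: x) y = a * inner x y.
Proof. by rewrite /inner mulr_sumr; apply: eq_bigr => k _; rewrite mxE mulrA. Qed.
Lemma innerNl x y : inner (- x) y = - inner x y.
Proof. by rewrite /inner -sumrN; apply: eq_bigr => k _; rewrite mxE mulNr. Qed.
Lemma innerBl x y z : inner (x - y) z = inner x z - inner y z.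
Proof. by rewrite innerDl innerNl. Qed.
Lemma innerDr x y z : inner x (y + z) = inner x y + inner x z.
Proof.
by rewrite /inner -big_split; apply: eq_bigr => k _; rewrite mxE (cjD Hs) mulrDr.
Qed.
Lemma innerZr a x y : inner x (a *: y) = cj a * inner x y.
Proof.
by rewrite /inner mulr_sumr; apply: eq_bigr => k _; rewrite mxE (cjM Hs) mulrCA.
Qed.
Lemma innerNr x y : inner x (- y) = - inner x y.
Proof. by rewrite /inner -sumrN; apply: eq_bigr => k _; rewrite mxE cjN mulrN. Qed.
Lemma innerBr x y z : inner x (y - z) = inner x y - inner x z.
Proof. by rewrite innerDr innerNr. Qed.
Lemma inner_cj x y : inner y x = cj (inner x y).
Proof.
by rewrite /inner cj_sum; apply: eq_bigr => k _; rewrite (cjM Hs) (cjK Hs) mulrC.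
Qed.
Lemma inner0l y : inner 0 y = 0.
Proof. by rewrite /inner big1 // => k _; rewrite mxE mul0r. Qed.
Lemma inner_suml (I : Type) (r : seq I) (P : pred I) (v : I -> vec) y :
  inner (\sum_(i <- r | P i) v i) y = \sum_(i <- r | P i) inner (v i) y.
Proof. exact: (big_morph (fun x => inner x y) (fun a b => innerDl a b y) (inner0l y)). Qed.

Lemma sqnorm_eq0 x : sqnorm x = 0 -> x = 0.
Proof.
move=> x0; apply/matrixP => k j; rewrite ord1 mxE.
have /eqP := psumr_eq0P (fun i _ => sqr_ge0 (ab (x i 0))) x0 (i:=k) isT.
by rewrite sqrf_eq0 => /eqP /(ab_eq0 Hs).
Qed.
Lemma sqnormZ a x : sqnorm (a *: x) = ab a ^+ 2 * sqnorm x.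
Proof.
by rewrite /sqnorm mulr_sumr; apply: eq_bigr => k _; rewrite mxE (abM Hs) exprMn.
Qed.
Lemma vnormZ a x : vnorm (a *: x) = ab a * vnorm x.
Proof.
by rewrite /vnorm -/(sqnorm _) sqnormZ sqrtrM ?sqr_ge0 // sqrtr_sqr ger0_norm ?(ab_ge0 Hs).
Qed.
Lemma vnormZ_ge0 a x : 0 <= a -> vnorm (ofR a *: x) = a * vnorm x.
Proof. by move=> a0; rewrite vnormZ abR_ge0. Qed.
Lemma sqnormD x y : sqnorm (x + y) = sqnorm x + sqnorm y + re (inner x y) *+ 2.
Proof.
apply: (ofR_inj Hs); rewrite (ofRD Hs (_ + _)) (ofRD Hs (sqnorm x)) (sreP Hs) -!inner_self.
by rewrite !innerDl !innerDr (inner_cj x y); ring.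
Qed.

Lemma inner_le x y : ab (inner x y) <= vnorm x * vnorm y.
Proof.
apply: (le_trans (ab_sum _ _ _)).
under eq_bigr => k _ do rewrite (abM Hs) (ab_cj Hs).
exact: cauchy_schwarz.
Qed.
Lemma vnormD x y : vnorm (x + y) <= vnorm x + vnorm y.
Proof.
rewrite -(ger0_norm (addr_ge0 (vnorm_ge0 x) (vnorm_ge0 y))) -sqrtr_sqr.
rewrite ler_sqrt ?sqr_ge0 // -/(sqnorm _) sqnormD -!vnorm_sqr.
have := le_trans (sre_le Hs _) (inner_le x y); rewrite mulr2n; nra.
Qed.

Lemma mul_rank1 g f x : (g *m vadj f) *m x = inner x f *: g.
Proof.
rewrite -mulmxA; apply/matrixP => i j; rewrite ord1 !mxE big_ord1 !mxE mulrC.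
by congr (_ * _); apply: eq_bigr => k _; rewrite !mxE mulrC ord1.
Qed.

Lemma opnorm_rank1 q g f : 0 <= q ->
  opnorm (ofR q *: (g *m vadj f)) = q * vnorm g * vnorm f.
Proof.
move=> q0; apply: sup_nneg_attained.
- by rewrite !mulr_ge0 // vnorm_ge0.
- move=> y [x /= x1 <-].
  rewrite -scalemxAl mul_rank1 scalerA vnormZ (abM Hs) abR_ge0 //.
  rewrite !mulr_ge0 ?(ab_ge0 Hs) ?vnorm_ge0 //= -!mulrA ler_wpM2l // mulrC.
  by rewrite ler_wpM2l ?vnorm_ge0 // -[vnorm f]mul1r -x1 inner_le.
- move=> qgf_gt0; have vf_gt0 : 0 < vnorm f.
    by rewrite lt_def vnorm_ge0 andbT; apply: contraTneq qgf_gt0 => ->; rewrite mulr0 ltxx.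
  exists (ofR (vnorm f)^-1 *: f) => /=.
    by rewrite vnormZ_ge0 ?invr_ge0 ?vnorm_ge0 // mulVf ?gt_eqF.
  rewrite -scalemxAl mul_rank1 scalerA vnormZ (abM Hs) abR_ge0 //.
  rewrite innerZl inner_self -(ofRM Hs) abR_ge0; last first.
    by rewrite mulr_ge0 ?invr_ge0 ?vnorm_ge0 ?sqnorm_ge0.
  by rewrite -vnorm_sqr; field; rewrite gt_eqF.
Qed.

Lemma toC_inner g f : toC (inner g f) = \sum_k toC (g k 0) * (toC (f k 0))^*%C.
Proof.
by rewrite /inner toC_sum; apply: eq_bigr => k _; rewrite (toCM Hs) (toC_cj Hs).
Qed.

Lemma row_mul_rank1 q g f (v : 'rV_n) j :
  (v *m map_mx toC (ofR q *: (g *m vadj f))) 0 j =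
  q%:C%C * (\sum_i v 0 i * toC (g i 0)) * (toC (f j 0))^*%C.
Proof.
rewrite !mxE mulr_sumr mulr_suml; apply: eq_bigr => i _.
rewrite !mxE big_ord1 !mxE (toCM Hs) (toCR Hs) (toCM Hs) (toC_cj Hs) ord1; ring.
Qed.

Lemma eigenvalue_rank1 q g f l :
  eigenvalue (map_mx toC (ofR q *: (g *m vadj f))) l ->
  l = 0 \/ l = q%:C%C * toC (inner g f).
Proof.
move=> /eigenvalueP [v vM v0]; have [->|l0] := eqVneq l 0; [by left | right].
set s := \sum_i v 0 i * toC (g i 0).
have lv j : l * v 0 j = q%:C%C * s * (toC (f j 0))^*%C.
  by rewrite -row_mul_rank1 vM mxE.
have s0 : s != 0.
  apply: contra v0 => /eqP s0; apply/eqP/matrixP => i j; rewrite ord1 mxE.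
  by apply: (mulfI l0); rewrite lv s0 mulr0 mul0r mulr0.
apply: (mulIf s0); rewrite {1}/s mulr_sumr toC_inner mulr_sumr mulr_suml.
by apply: eq_bigr => i _; rewrite [l * _]mulrA lv; ring.
Qed.

Lemma eigenvalue_rank1_inner q g f : q%:C%C * toC (inner g f) != 0 ->
  eigenvalue (map_mx toC (ofR q *: (g *m vadj f))) (q%:C%C * toC (inner g f)).
Proof.
move=> qgf0; apply/eigenvalueP; exists (\row_j (toC (f j 0))^*%C).
  apply/matrixP => i j; rewrite ord1 row_mul_rank1 !mxE toC_inner; congr (_ * _ * _).
  by apply: eq_bigr => k _; rewrite mxE mulrC.
apply: contra qgf0 => /eqP/matrixP fC0; rewrite toC_inner big1 ?mulr0 // => k _.
by have := fC0 0 k; rewrite !mxE => ->; rewrite mulr0.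
Qed.

Lemma specrad_rank1 q g f : 0 <= q ->
  specrad (ofR q *: (g *m vadj f)) = q * ab (inner g f).
Proof.
move=> q0; have normc_qgf : Normc.normc (q%:C%C * toC (inner g f)) = q * ab (inner g f).
  by rewrite Normc.normcM -(toCR Hs) !(normc_toC Hs) abR_ge0.
apply: sup_nneg_attained => [|y [l /= /eigenvalue_rank1 l_eq <-]|qgf_gt0].
- by rewrite mulr_ge0 ?(ab_ge0 Hs).
- have qgf_ge0 : 0 <= q * ab (inner g f) by rewrite mulr_ge0 ?(ab_ge0 Hs).
  by case: l_eq => ->; rewrite ?Normc.normc0 ?normc_qgf lexx qgf_ge0.
- exists (q%:C%C * toC (inner g f)); last exact: normc_qgf.
  apply: eigenvalue_rank1_inner; apply: contraTneq qgf_gt0.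
  by rewrite -normc_qgf => ->; rewrite Normc.normc0 ltxx.
Qed.

Lemma convex_combE (t : R) u g : ofR (1 - t) *: u + ofR t *: g = u + ofR t *: (g - u).
Proof. by rewrite ofRB (ofR1 Hs) scalerBl scale1r scalerBr -addrA [- _ + _]addrC. Qed.

Lemma vnorm_convex (t : R) u g : 0 <= t <= 1 ->
  vnorm (ofR (1 - t) *: u + ofR t *: g) <= (1 - t) * vnorm u + t * vnorm g.
Proof.
case/andP => t0 t1; apply: le_trans (vnormD _ _) _.
by rewrite !vnormZ_ge0 ?subr_ge0.
Qed.

Lemma sqnorm_decreases u v : re (inner u v) < 0 ->
  eventually_right0 (fun t => sqnorm (u + ofR t *: v) <= sqnorm u).
Proof.
move=> uv_lt0; have d_gt0 : 0 < sqnorm v + 1 by rewrite ltr_wpDl ?sqnorm_ge0.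
exists ((- re (inner u v)) *+ 2 / (sqnorm v + 1)).
  by rewrite divr_gt0 // mulrn_wgt0 // oppr_gt0.
move=> t /andP [t_gt0]; rewrite ler_pdivlMr // => t_le.
rewrite sqnormD sqnormZ abR_ge0 ?ltW // innerZr (cjR Hs) sreZ.
have := sqnorm_ge0 v; rewrite !mulr2n in t_le *; nra.
Qed.

(* Otherwise [|u|^2 <= |<g, u>|] forces [|g| <= |u|], hence [|g - u|^2 <= 0]. *)
Lemma sre_inner_lt u g : 0 < vnorm u -> g != u ->
  vnorm g * vnorm u + ab (inner g u) <= (vnorm u ^+ 2) *+ 2 ->
  re (inner g u) < sqnorm u.
Proof.
move=> u_gt0 gu g_small; rewrite ltNge; apply: contra gu => re_ge.
have ab_ge : sqnorm u <= ab (inner g u) := le_trans re_ge (sre_le Hs _).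
have vg_le : vnorm g <= vnorm u.
  rewrite -(ler_pM2r u_gt0) -expr2; move: g_small; rewrite vnorm_sqr mulr2n; lra.
have sqg_le : sqnorm g <= sqnorm u.
  by rewrite -!vnorm_sqr lerXn2r ?nnegrE ?vnorm_ge0.
have sqnormN : sqnorm (- u) = sqnorm u.
  by rewrite -scaleN1r -(ofR1 Hs) -ofRN sqnormZ (abR Hs) normrN normr1 expr1n mul1r.
have : sqnorm (g - u) <= 0 by rewrite sqnormD innerNr sreN sqnormN mulr2n; lra.
by move=> gu_le0; apply/eqP/subr0_eq/sqnorm_eq0/le_anti; rewrite gu_le0 sqnorm_ge0.
Qed.

Lemma vnorm_shrinks_towards u g : 0 < vnorm u ->
  vnorm g * vnorm u + ab (inner g u) <= (vnorm u ^+ 2) *+ 2 ->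
  eventually_right0 (fun t => vnorm (ofR (1 - t) *: u + ofR t *: g) <= vnorm u).
Proof.
move=> u_gt0 g_small; have [->|gu] := eqVneq g u.
  by exists 1 => // t _; rewrite convex_combE subrr scaler0 addr0.
have : re (inner u (g - u)) < 0.
  rewrite innerBr sreB inner_self sreR inner_cj sre_cj subr_lt0.
  exact: sre_inner_lt.
move=> /sqnorm_decreases [t0 t0_gt0 decr]; exists t0 => // t t_small.
by rewrite convex_combE ler_sqrt ?sqnorm_ge0 // decr.
Qed.

Lemma err_norm_towards_le (q a M : R) u g (f : vec) :
  0 <= q -> 0 < a -> f = ofR a *: u ->
  q * vnorm u * vnorm f <= M ->
  (q * vnorm g * vnorm f + q * ab (inner g f)) / 2 <= M ->
  eventually_right0 (fun t => q * vnorm (ofR (1 - t) *: u + ofR t *: g) * vnorm f <= M).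
Proof.
move=> q0 a_gt0 fE m_le avg_le; set m := q * vnorm u * vnorm f in m_le.
have [mM|Mm] := ltP m M.
  have [t0 t0_gt0 conv] := convex_lt_eventually (q * vnorm g * vnorm f) mM.
  exists t0 => // t t_small; have [t_le1 conv_le] := conv t t_small.
  apply: le_trans _ conv_le.
  have -> : (1 - t) * m + t * (q * vnorm g * vnorm f) =
            q * ((1 - t) * vnorm u + t * vnorm g) * vnorm f by rewrite /m; ring.
  rewrite ler_wpM2r ?vnorm_ge0 // ler_wpM2l // vnorm_convex // t_le1 ltW //.
  by case/andP: t_small.
have mE : m = M by apply/le_anti; rewrite m_le Mm.
have [qf0|qf_neq0] := eqVneq (q * vnorm f) 0.
  by exists 1 => // t _; rewrite -mE /m mulrAC qf0 mul0r mulrAC qf0 mul0r.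
have q_gt0 : 0 < q by rewrite lt0r q0 andbT; apply: contraNneq qf_neq0 => ->; rewrite mul0r.
have vfE : vnorm f = a * vnorm u by rewrite fE (vnormZ_ge0 _ (ltW a_gt0)).
have u_gt0 : 0 < vnorm u.
  by rewrite lt0r vnorm_ge0 andbT; apply: contraNneq qf_neq0 => u0; rewrite vfE u0 !mulr0.
have g_small : vnorm g * vnorm u + ab (inner g u) <= (vnorm u ^+ 2) *+ 2.
  move: avg_le; rewrite -mE /m {2}fE innerZr (cjR Hs) (abM Hs) (abR_ge0 (ltW a_gt0)).
  rewrite vfE ler_pdivrMr //.
  have -> : q * vnorm g * (a * vnorm u) + q * (a * ab (inner g u)) =
            q * a * (vnorm g * vnorm u + ab (inner g u)) by ring.
  have -> : q * vnorm u * (a * vnorm u) * 2 = q * a * (vnorm u ^+ 2 *+ 2).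
    by rewrite mulr2n; ring.
  by rewrite ler_pM2l // mulr_gt0.
have [t0 t0_gt0 w_le] := vnorm_shrinks_towards u_gt0 g_small.
by exists t0 => // t t_small; rewrite -mE /m ler_wpM2r ?vnorm_ge0 // ler_wpM2l // w_le.
Qed.

Section Frames.
Variable N : nat.
Implicit Types F G : 'I_N -> vec.

Lemma frame_opE F x : frame_op F *m x = \sum_i inner x (F i) *: F i.
Proof. by rewrite /frame_op mulmx_suml; apply: eq_bigr => i _; rewrite mul_rank1. Qed.

Lemma sum_sqr_inner_le G f :
  \sum_i ab (inner f (G i)) ^+ 2 <= (\sum_i sqnorm (G i)) * vnorm f ^+ 2.
Proof.
rewrite mulr_suml; apply: ler_sum => i _.
rewrite -vnorm_sqr mulrC -exprMn lerXn2r ?nnegrE ?(ab_ge0 Hs) ?mulr_ge0 ?vnorm_ge0 //.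
exact: inner_le.
Qed.

Lemma sqnorm_le_reconstruction F G f : f = \sum_i inner f (G i) *: F i ->
  sqnorm f ^+ 2 <=
    (\sum_i ab (inner f (G i)) ^+ 2) * (\sum_i ab (inner f (F i)) ^+ 2).
Proof.
move=> f_rec; set X := \sum_i _; set Y := \sum_i _.
have X0 : 0 <= X by apply: sumr_ge0 => i _; apply: sqr_ge0.
have Y0 : 0 <= Y by apply: sumr_ge0 => i _; apply: sqr_ge0.
have : sqnorm f <= Num.sqrt X * Num.sqrt Y.
  rewrite -[sqnorm f]abR_ge0 ?sqnorm_ge0 // -inner_self {1}f_rec inner_suml.
  apply: le_trans (ab_sum _ _ _) _.
  under eq_bigr => i _ do rewrite innerZl (abM Hs) (inner_cj f) (ab_cj Hs).
  exact: cauchy_schwarz.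
rewrite -sqrtrM // => /(lerXn2r 2); rewrite sqr_sqrtr ?mulr_ge0 //; apply.
  by rewrite nnegrE sqnorm_ge0.
by rewrite nnegrE sqrtr_ge0.
Qed.

Lemma frame_of_reconstruction F G : is_frame F ->
  (forall f, f = \sum_i inner f (G i) *: F i) -> is_frame G.
Proof.
move=> [A [B [A0 [B0 F_bounds]]]] G_rec.
exists B^-1, (1 + \sum_i sqnorm (G i)); split; first by rewrite invr_gt0.
split; first by rewrite ltr_wpDr // sumr_ge0 // => i _; apply: sqnorm_ge0.
move=> f; split; last first.
  by apply: le_trans (sum_sqr_inner_le G f) _; rewrite mulrDl mul1r lerDr sqr_ge0.
rewrite vnorm_sqr ler_pdivrMl //; set X := \sum_i _.
have X0 : 0 <= X by apply: sumr_ge0 => i _; apply: sqr_ge0.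
have [f0|f_gt0] := eqVneq (sqnorm f) 0; first by rewrite f0 mulr_ge0 // ltW.
have {}f_gt0 : 0 < sqnorm f by rewrite lt_def f_gt0 sqnorm_ge0.
rewrite -(ler_pM2r f_gt0) -expr2 (le_trans (sqnorm_le_reconstruction (G_rec f))) //.
by rewrite -/X -mulrA mulrCA ler_wpM2l // -vnorm_sqr; case: (F_bounds f).
Qed.

Lemma dual_of_reconstruction F G : is_frame F ->
  (forall f, f = \sum_i inner f (F i) *: G i /\ f = \sum_i inner f (G i) *: F i) ->
  is_dual F G.
Proof.
move=> F_frame G_rec; split=> //.
by apply: frame_of_reconstruction F_frame _ => f; case: (G_rec f).
Qed.

Lemma selfadjoint_eq0 (T : 'M[K]_n) :
  (forall x y, inner (T *m y) x = cj (inner (T *m x) y)) ->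
  (forall x, inner (T *m x) x = 0) -> T = 0.
Proof.
move=> T_adj T_quad0.
have re_T0 x y : re (inner (T *m x) y) = 0.
  apply: sre_uniq; rewrite -T_adj mul0rn ofR0.
  have := T_quad0 (x + y); rewrite mulmxDr !innerDl !innerDr !T_quad0.
  by rewrite add0r addr0 => ->.
have T0 x : T *m x = 0.
  by apply: sqnorm_eq0; have := re_T0 x (T *m x); rewrite inner_self sreR.
apply/matrixP => i j; have : col j T i 0 = 0 by rewrite colE T0 mxE.
by rewrite !mxE.
Qed.

Lemma tight_frame_op F : is_tight_frame F ->
  exists2 A : R, 0 < A & frame_op F = (ofR A)%:M.
Proof.
move=> [_ [A [A0 F_tight]]]; exists A => //.
apply/eqP; rewrite -subr_eq0; apply/eqP; apply: selfadjoint_eq0 => [x y|x].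
  rewrite !mulmxBl !mul_scalar_mx !frame_opE !innerBl !innerZl !inner_suml.
  rewrite cjB cj_sum (cjM Hs) (cjR Hs) -(inner_cj x y).
  congr (_ - _); apply: eq_bigr => i _.
  by rewrite !innerZl (cjM Hs) -!inner_cj mulrC.
rewrite mulmxBl mul_scalar_mx frame_opE innerBl innerZl inner_suml.
rewrite inner_self -(ofRM Hs) -vnorm_sqr -F_tight ofR_sum.
apply/eqP; rewrite subr_eq0; apply/eqP.
by apply: eq_bigr => i _; rewrite innerZl (inner_cj x) (mul_cj Hs).
Qed.

Lemma canon_dual_scalar F A : frame_op F = (ofR A)%:M ->
  canon_dual F = fun i => ofR A^-1 *: F i.
Proof.
by move=> SF; apply: funext => i; rewrite /canon_dual SF invmx_scalar mul_scalar_mx ofRV.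
Qed.

Section Erasures.
Variables (F : 'I_N -> vec) (p : 'I_N -> R).
Hypothesis weight_ge0 : forall i, 0 <= weight n p i.

Definition err_norm G i := weight n p i * vnorm (G i) * vnorm (F i).
Definition err_avg G i := (err_norm G i + weight n p i * ab (inner (G i) (F i))) / 2.

Lemma O1E G : O1 p F G = \big[Num.max/0]_i err_norm G i.
Proof.
rewrite /O1 bigmax_cards1; apply: eq_bigr => i _.
by rewrite /err_op big_set1 opnorm_rank1.
Qed.

Lemma A1E G : A1 p F G = \big[Num.max/0]_i err_avg G i.
Proof.
rewrite /A1 bigmax_cards1; apply: eq_bigr => i _.
by rewrite /err_op big_set1 opnorm_rank1 // specrad_rank1.
Qed.

Lemma err_avg_le G i : err_avg G i <= err_norm G i.
Proof.
have : weight n p i * ab (inner (G i) (F i)) <= err_norm G i.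
  by rewrite /err_norm -mulrA ler_wpM2l // inner_le.
rewrite /err_avg; lra.
Qed.

Lemma A1_le_O1 G : A1 p F G <= O1 p F G.
Proof.
rewrite A1E O1E; apply: bigmax_le => [|i _]; first exact: bigmax_ge_id.
exact: le_trans (err_avg_le G i) (le_bigmax _ _ i).
Qed.

Lemma err_avg_parallel G i a : 0 <= a -> G i = ofR a *: F i -> err_avg G i = err_norm G i.
Proof.
move=> a0 GE; rewrite /err_avg /err_norm GE innerZl inner_self -(ofRM Hs).
rewrite abR_ge0 ?mulr_ge0 ?sqnorm_ge0 // vnormZ_ge0 // -vnorm_sqr.
by rewrite expr2; field.
Qed.

Lemma is_dual_convex G1 G2 t : is_frame F -> is_dual F G1 -> is_dual F G2 ->
  is_dual F (fun i => ofR (1 - t) *: G1 i + ofR t *: G2 i).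
Proof.
move=> F_frame [_ G1_rec] [_ G2_rec]; apply: dual_of_reconstruction => // f.
have comb_id : ofR (1 - t) *: f + ofR t *: f = f.
  by rewrite -scalerDl -(ofRD Hs) subrK (ofR1 Hs) scale1r.
split.
  have -> : \sum_i inner f (F i) *: (ofR (1 - t) *: G1 i + ofR t *: G2 i) =
      ofR (1 - t) *: \sum_i inner f (F i) *: G1 i + ofR t *: \sum_i inner f (F i) *: G2 i.
    rewrite !scaler_sumr -big_split; apply: eq_bigr => i _.
    by rewrite scalerDr !scalerA mulrC [_ * ofR t]mulrC.
  by rewrite -(G1_rec f).1 -(G2_rec f).1 comb_id.
have -> : \sum_i inner f (ofR (1 - t) *: G1 i + ofR t *: G2 i) *: F i =
    ofR (1 - t) *: \sum_i inner f (G1 i) *: F i + ofR t *: \sum_i inner f (G2 i) *: F i.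
  rewrite !scaler_sumr -big_split; apply: eq_bigr => i _.
  by rewrite innerDr !innerZr !(cjR Hs) scalerDl !scalerA.
by rewrite -(G1_rec f).2 -(G2_rec f).2 comb_id.
Qed.

Section TightFrame.
Hypothesis F_tight : is_tight_frame F.
Local Notation c := (canon_dual F).

Lemma tight_canon_dual : exists2 A, 0 < A & forall i, F i = ofR A *: c i.
Proof.
have [A A_gt0 SF] := tight_frame_op F_tight; exists A => // i.
rewrite (canon_dual_scalar SF) scalerA -(ofRM Hs) mulfV ?gt_eqF //.
by rewrite (ofR1 Hs) scale1r.
Qed.

Lemma canon_dual_is_dual : is_dual F c.
Proof.
have [A A_gt0 SF] := tight_frame_op F_tight.
apply: (dual_of_reconstruction F_tight.1) => f.
have f_rec : f = ofR A^-1 *: \sum_i inner f (F i) *: F i.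
  rewrite -frame_opE SF mul_scalar_mx scalerA -(ofRM Hs) mulVf ?gt_eqF //.
  by rewrite (ofR1 Hs) scale1r.
rewrite (canon_dual_scalar SF) {1 3}f_rec !scaler_sumr; split.
  by apply: eq_bigr => i _; rewrite !scalerA mulrC.
by apply: eq_bigr => i _; rewrite innerZr (cjR Hs) scalerA.
Qed.

Lemma A1_canon_dual : A1 p F c = O1 p F c.
Proof.
have [A A_gt0 SF] := tight_frame_op F_tight.
rewrite A1E O1E; apply: eq_bigr => i _; apply: (err_avg_parallel (a := A^-1)).
  by rewrite invr_ge0 ltW.
by rewrite (canon_dual_scalar SF).
Qed.

(* Moving the canonical dual slightly towards [G] does not increase [O1]. *)
Lemma dual_towards G : is_dual F G -> A1 p F G <= O1 p F c ->
  exists G', [/\ is_dual F G', O1 p F G' <= O1 p F c & G' = c -> G = c].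
Proof.
move=> G_dual AG_le; have [A A_gt0 Fc] := tight_canon_dual.
set G' := fun t i => ofR (1 - t) *: c i + ofR t *: G i.
have : eventually_right0 (fun t => forall i, err_norm (G' t) i <= O1 p F c).
  apply: eventually_right0_forall => i; apply: (err_norm_towards_le _ A_gt0 (Fc i)) => //.
    by rewrite O1E; apply: (le_bigmax _ (err_norm c) i).
  by apply: le_trans AG_le; rewrite A1E; apply: (le_bigmax _ (err_avg G) i).
case=> t t_gt0 /(_ t) G't_le; exists (G' t); split.
- exact: is_dual_convex F_tight.1 canon_dual_is_dual G_dual.
- rewrite O1E; apply: bigmax_le => [|i _]; first by rewrite O1E bigmax_ge_id.
  by apply: G't_le; rewrite t_gt0 lexx.
- move=> G't_c; apply: funext => i; have /eqP := congr1 (fun H => H i) G't_c.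
  rewrite /G' convex_combE addrC -subr_eq0 addrK scaler_eq0 ofR_eq0 gt_eqF //=.
  by rewrite subr_eq0 => /eqP.
Qed.

Lemma unique_POD_unique_PASOD :
  unique_POD_among_duals p F c -> unique_PASOD_among_duals p F c.
Proof.
case=> [[_ POD_c] POD_uniq].
have eq_canon_of_A1_le G : is_dual F G -> A1 p F G <= O1 p F c -> G = c.
  move=> G_dual /(dual_towards G_dual) [G' [G'_dual G'_le ->]] //.
  apply: POD_uniq; split => [|H H_dual]; first exact: G'_dual.
  exact: le_trans G'_le (POD_c H H_dual).
split; first split; first exact: canon_dual_is_dual.
  move=> G G_dual; rewrite leNgt; apply/negP => AG_lt.
  have /(eq_canon_of_A1_le G G_dual) Gc : A1 p F G <= O1 p F c.
    by rewrite -A1_canon_dual ltW.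
  by rewrite Gc ltxx in AG_lt.
move=> G [G_dual G_min]; apply: eq_canon_of_A1_le G_dual _.
by rewrite -A1_canon_dual; apply: G_min canon_dual_is_dual.
Qed.

Lemma unique_PASOD_unique_POD :
  unique_PASOD_among_duals p F c -> unique_POD_among_duals p F c.
Proof.
case=> [[_ PASOD_c] PASOD_uniq].
split; first split; first exact: canon_dual_is_dual.
  move=> G G_dual; rewrite -A1_canon_dual.
  exact: le_trans (PASOD_c G G_dual) (A1_le_O1 G).
move=> G [G_dual G_min]; apply: PASOD_uniq; split => [|H H_dual]; first exact: G_dual.
apply: le_trans (A1_le_O1 G) _; apply: le_trans (G_min c canon_dual_is_dual) _.
by rewrite -A1_canon_dual; apply: PASOD_c.
Qed.

Lemma unique_POD_iff_unique_PASOD :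
  unique_POD_among_duals p F c <-> unique_PASOD_among_duals p F c.
Proof. by split; [exact: unique_POD_unique_PASOD | exact: unique_PASOD_unique_POD]. Qed.

End TightFrame.
End Erasures.
End Frames.
End Hilbert.

Lemma prob_seq_weight_ge0 (R : realType) (n N : nat) (p : 'I_N -> R) :
  prob_seq p -> forall i, 0 <= weight n p i.
Proof.
case=> p_bounds p_sum i; rewrite /weight p_sum mulr_ge0 ?divr_ge0 ?ler0n //.
by rewrite subr_ge0; case/andP: (p_bounds i).
Qed.

Theorem theorem4p4 :
  forall (R : realType) (S : scalars R),
    S = realScalars R \/ S = complexScalars R ->
  forall (n N : nat) (F : 'I_N -> 'cV[sK S]_n) (p : 'I_N -> R),
    is_tight_frame F -> prob_seq p ->
    (unique_POD_among_duals p F (canon_dual F) <->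
     unique_PASOD_among_duals p F (canon_dual F)).
Proof.
move=> R S S_cases n N F p F_tight p_prob.
have q_ge0 := prob_seq_weight_ge0 n p_prob.
case: S_cases => S_eq; subst S.
- exact: (unique_POD_iff_unique_PASOD (real_scalar_laws R) q_ge0 F_tight).
- exact: (unique_POD_iff_unique_PASOD (complex_scalar_laws R) q_ge0 F_tight).
Qed.
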